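(* Let $n\geq 0$ and $\beta\geq 2$ be integers and let $i\in\{1,2\}$. Then for every integer $\alpha\geq 0$, $$\overline{B}_{2^{2\alpha+1},3^\beta}(9n+3i)\equiv 0\pmod 4,$$ and for every integer $\alpha\geq 1$, $$\overline{B}_{2^{2\alpha},3^\beta}(9n+3i)\equiv 0\pmod 8.$$
   Context: An overpartition of a nonnegative integer $n$ is a partition of $n$ (a non-increasing sequence of positive integers summing to $n$) in which the first occurrence of each distinct part may be overlined. For relatively prime integers $\ell_1,\ell_2>1$, an $(\ell_1,\ell_2)$-biregular overpartition of $n$ is an overpartition of $n$ none of whose parts is divisible by $\ell_1$ or by $\ell_2$, and $\overline{B}_{\ell_1,\ell_2}(n)$ denotes the number of such overpartitions ($\overline{B}_{\ell_1,\ell_2}(0)=1$). Equivalently, writing $f_k=(q^k;q^k)_\infty=\prod_{m\ge1}(1-q^{km})$ for $|q|<1$, $$\sum_{n\ge0}\overline{B}_{\ell_1,\ell_2}(n)q^n=\frac{f_2\, f_{\ell_1}^2\, f_{\ell_2}^2\, f_{2\ell_1\ell_2}}{f_1^2\, f_{2\ell_1}\, f_{2\ell_2}\, f_{\ell_1\ell_2}^2}.$$ *)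

From mathcomp Require Import all_boot.
Set Implicit Arguments. Unset Strict Implicit. Unset Printing Implicit Defensive.

Definition bireg_allowed (l1 l2 k : nat) : bool := ~~ (l1 %| k) && ~~ (l2 %| k).

(* ovcount l1 l2 k n = number of overpartitions of n all of whose parts are
   <= k and allowed.  An overpartition is determined by choosing, for each
   part size j, its multiplicity m_j >= 0 and, when m_j >= 1, whether the
   first occurrence of j is overlined (2 choices). *)
Fixpoint ovcount (l1 l2 k n : nat) : nat :=
  match k with
  | 0 => nat_of_bool (n == 0)
  | k'.+1 =>
      ovcount l1 l2 k' n +
      (if bireg_allowed l1 l2 k'.+1 then
         \sum_(1 <= m < (n %/ k'.+1).+1) 2 * ovcount l1 l2 k' (n - m * k'.+1)
       else 0)
  end.

(* \overline{B}_{l1,l2}(n): every part of an overpartition of n is <= n. *)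
Definition Bbar (l1 l2 n : nat) : nat := ovcount l1 l2 n n.

From mathcomp Require Import all_boot zify.
Set Implicit Arguments. Unset Strict Implicit. Unset Printing Implicit Defensive.

(* Write c(n) for the number of allowed divisors of n (partitions of n into
   copies of a single allowed part) and P(n) for the number of partitions of n
   with exactly two distinct allowed part sizes.  Each distinct part size of an
   overpartition carries a factor 2 (its first occurrence is overlined or not),
   so Bbar(N) = 2 c(N) + 4 P(N) (mod 8) for N > 0.
   Let 3 || N.  Then d <-> 3d (or d/3) is a fixed-point-free involution on the
   allowed divisors of N, so c(N) is even, which gives the congruence mod 4, and
   the sum of N/d over them is 0 mod 4.  For the congruence mod 8 it remains to
   see c(N) + 2 P(N) = 0 mod 4.  Counting solutions of m a + m' b = N gives
   sum_x c(x) c(N - x) = 2 P(N) + D and c(N) + D = sum_d N/d, and the convolution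
   is 0 mod 4 because x <-> N - x pairs products that are even: c(x) is even when
   3 || x, and when x = 2 mod 3 either 2^s | x (pair d with 2d or d/2 according
   to the parity of the 2-adic valuation of d, s being even) or x is itself
   allowed and not a square (pair d with x/d). *)

Lemma dvdn_sum_involution (N k : nat) (A : pred nat) (s f : nat -> nat) :
  (forall a, A a -> a <= N) ->
  (forall a, A a -> A (s a) /\ s (s a) = a) ->
  (forall a, A a -> s a = a -> k %| f a) ->
  (forall a, A a -> a < s a -> k %| f a + f (s a)) ->
  k %| \sum_(a < N.+1 | A a) f a.
Proof.
move=> AN As dvd_fix dvd_pair.
(* Extend s to an involution of 'I_N.+1 fixing the points outside A; each pair
   {a, s a} is then counted once, through its smaller element. *)
pose t (a : 'I_N.+1) : 'I_N.+1 := if A a then inord (s a) else a.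
have tE (a : 'I_N.+1) : A a -> t a = s a :> nat.
  by move=> Aa; rewrite /t Aa inordK // ltnS AN // (As _ Aa).1.
have At (a : 'I_N.+1) : A a -> A (t a) by move=> Aa; rewrite tE // (As _ Aa).1.
have tK : involutive t.
  move=> a; case Aa: (A a); last by rewrite /t Aa Aa.
  by apply: val_inj => /=; rewrite tE ?At // tE // (As _ Aa).2.
have -> : \sum_(a < N.+1 | A a) f a = \sum_(a < N.+1 | A a && (t a == a)) f a
    + \sum_(a < N.+1 | A a && (a < t a)) (f a + f (t a)).
  rewrite (bigID (fun a : 'I_N.+1 => t a == a)) /=; congr (_ + _).
  rewrite (bigID (fun a : 'I_N.+1 => a < t a)) big_split /=; congr (_ + _).
    apply: eq_bigl => a; have [lt|_] := ltnP a (t a); rewrite ?andbF // !andbT.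
    by case: eqP lt => [->|]; rewrite ?ltnn ?andbT.
  rewrite (reindex_inj (can_inj tK)) /=; apply: eq_bigl => a.
  rewrite tK; case Aa: (A a); last by rewrite /t Aa /= Aa.
  by rewrite (At _ Aa) -val_eqE /= -leqNgt -ltn_neqAle.
apply: dvdn_add.
  apply: dvdn_sum => a /andP[Aa /eqP ta].
  by apply: dvd_fix; rewrite -?tE // ta.
apply: dvdn_sum => a /andP[Aa lt].
by rewrite tE //; apply: dvd_pair; rewrite -?tE.
Qed.

Lemma bireg_allowed_dvd l1 l2 d m :
  d %| m -> bireg_allowed l1 l2 m -> bireg_allowed l1 l2 d.
Proof.
move=> dm /andP[h1 h2]; have dvd_m c : c %| d -> c %| m by move/dvdn_trans; apply.
by rewrite /bireg_allowed (contra (dvd_m l1) h1) (contra (dvd_m l2) h2).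
Qed.

Lemma bireg_allowed_gt0 l1 l2 d : bireg_allowed l1 l2 d -> 0 < d.
Proof. by case: d => //; rewrite /bireg_allowed dvdn0. Qed.

Definition allowed_div (l1 l2 d n : nat) : bool :=
  bireg_allowed l1 l2 d && (d %| n) && (0 < n).

Definition npart1 (l1 l2 k n : nat) : nat := \sum_(d < k.+1) allowed_div l1 l2 d n.

Lemma npart1_0 l1 l2 k : npart1 l1 l2 k 0 = 0.
Proof. by rewrite /npart1 big1 // => d _; rewrite /allowed_div andbF. Qed.

(* [a] is the largest part size, taken [m] times; the rest uses a single smaller part size. *)
Definition npart2 (l1 l2 k n : nat) : nat :=
  \sum_(a < k.+1) (if bireg_allowed l1 l2 a then
    \sum_(1 <= m < (n %/ a).+1) npart1 l1 l2 a.-1 (n - m * a) else 0).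

Lemma npart1S l1 l2 k n : npart1 l1 l2 k.+1 n =
  npart1 l1 l2 k n + allowed_div l1 l2 k.+1 n.
Proof. by rewrite /npart1 big_ord_recr. Qed.

Lemma npart2S l1 l2 k n : npart2 l1 l2 k.+1 n = npart2 l1 l2 k n +
  (if bireg_allowed l1 l2 k.+1 then
     \sum_(1 <= m < (n %/ k.+1).+1) npart1 l1 l2 k (n - m * k.+1) else 0).
Proof. by rewrite /npart2 big_ord_recr. Qed.

Lemma sum_multiples d N (g : nat -> nat) : 0 < d ->
  \sum_(1 <= m < (N %/ d).+1) g (m * d) = \sum_(x < N.+1) ((d %| x) && (0 < x)) * g x.
Proof.
move=> d0; elim: N => [|N IH]; first by rewrite div0n big_geq // big_ord1 /= andbF.
rewrite big_ord_recr /= -IH divnS //.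
case dN: (d %| N.+1) => /=; last by rewrite mul0n addn0.
have dNE : (N %/ d).+1 = N.+1 %/ d by rewrite divnS // dN.
by rewrite add1n big_nat_recr //= mul1n dNE divnK.
Qed.

Lemma sum_multiples_eq d n : 0 < d ->
  \sum_(1 <= m < (n %/ d).+1) (n - m * d == 0) = (d %| n) && (0 < n).
Proof.
move=> d0; rewrite (@sum_multiples d n (fun x => n - x == 0 : nat)) // big_ord_recr /= subnn.
by rewrite big1 ?muln1 // => x _; rewrite /= subn_eq0 (leqNgt n) ltn_ord muln0.
Qed.

Lemma ovcount_mod8 l1 l2 k n : ovcount l1 l2 k n =
  (n == 0) + 2 * npart1 l1 l2 k n + 4 * npart2 l1 l2 k n %[mod 8].
Proof.
elim: k n => [|k IH] n.
  by rewrite /npart1 /npart2 !big_ord1 /= /allowed_div /bireg_allowed !dvdn0 /= !muln0 !addn0.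
rewrite /= npart1S npart2S /allowed_div; case: bireg_allowed => /=; last by rewrite !addn0 IH.
set S := \sum_(1 <= m < _) npart1 _ _ _ _.
have HS : \sum_(1 <= m < (n %/ k.+1).+1) 2 * ovcount l1 l2 k (n - m * k.+1) =
    2 * ((k.+1 %| n) && (0 < n)) + 4 * S %[mod 8].
  rewrite -sum_multiples_eq // /S !big_distrr -big_split /= -modn_summ -[RHS]modn_summ.
  congr (_ %% 8); apply: eq_bigr => m _.
  rewrite -modnMmr IH modnMmr; lia.
rewrite -modnDm IH HS modnDm; congr (_ %% 8); lia.
Qed.

Lemma npart1_even l1 l2 N n (s : nat -> nat) : 0 < n <= N ->
  (forall d, bireg_allowed l1 l2 d && (d %| n) ->
     [/\ bireg_allowed l1 l2 (s d) && (s d %| n), s (s d) = d & s d != d]) ->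
  2 %| npart1 l1 l2 N n.
Proof.
case/andP=> n0 nN hs.
have -> : npart1 l1 l2 N n = \sum_(d < N.+1 | bireg_allowed l1 l2 d && (d %| n)) 1.
  by rewrite big_mkcond; apply: eq_bigr => d _; rewrite /allowed_div n0 andbT; case: (_ && _).
apply: (@dvdn_sum_involution N 2 (fun d => bireg_allowed l1 l2 d && (d %| n)) s (fun=> 1)) => // d.
- by case/andP=> _ /(dvdn_leq n0) /leq_trans; apply.
- by case/hs.
- by case/hs=> _ _ /eqP.
Qed.

Definition tri (d : nat) : nat := if 3 %| d then d %/ 3 else 3 * d.

Lemma tri_neq d : 0 < d -> tri d != d.
Proof. by move=> d0; rewrite /tri; case: ifP => _; lia. Qed.

Lemma tri_gt d : d < tri d -> tri d = 3 * d.
Proof. by rewrite /tri; case: ifP => // _; rewrite ltnNge leq_div. Qed.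

Section Tripling.

Variables (l1 l2 n : nat).
Hypotheses (l1_coprime3 : coprime l1 3) (dvd9_l2 : 9 %| l2).
Hypotheses (dvd3_n : 3 %| n) (ndvd9_n : ~~ (9 %| n)).

Let A d := bireg_allowed l1 l2 d && (d %| n).

Lemma tri_involutive d : A d -> [/\ A (tri d), tri (tri d) = d & tri d != d].
Proof.
case/andP=> ad dn; have d0 := bireg_allowed_gt0 ad.
have ndvd3 m : 3 * m %| n -> ~~ (3 %| m).
  move=> mn; apply: contra ndvd9_n => m3; apply: dvdn_trans mn.
  by rewrite (_ : 9 = 3 * 3) // dvdn_pmul2l.
rewrite tri_neq // /tri; case: ifPn => d3.
  have q3 : ~~ (3 %| d %/ 3) by apply: ndvd3; rewrite mulnC divnK.
  rewrite (negbTE q3) mulnC divnK //; split => //.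
  by rewrite /A (bireg_allowed_dvd (dvdn_div d3) ad) (dvdn_trans (dvdn_div d3) dn).
have d3n : 3 * d %| n by rewrite Gauss_dvd ?prime_coprime // dvd3_n.
rewrite dvdn_mulr // mulKn //; split => //.
rewrite /A d3n andbT; case/andP: ad => nl1_d nl2_d; apply/andP; split.
  by rewrite Gauss_dvdr.
by apply: contra ndvd9_n => l2_3d; apply: dvdn_trans dvd9_l2 (dvdn_trans l2_3d d3n).
Qed.

Lemma npart1_even_tri N : 0 < n <= N -> 2 %| npart1 l1 l2 N n.
Proof. by move=> nN; apply: (npart1_even nN); apply: tri_involutive. Qed.

Lemma dvd4_sum_quotient_tri : 0 < n -> 4 %| \sum_(d < n.+1 | A d) n %/ d.
Proof.
move=> n0; apply: (@dvdn_sum_involution n 4 A tri (fun d => n %/ d)) => d Ad.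
- by apply: dvdn_leq n0 _; case/andP: Ad.
- by case: (tri_involutive Ad).
- by case: (tri_involutive Ad) => _ _ /eqP.
move=> /tri_gt tri_d.
have /andP[_] : A (tri d) by case: (tri_involutive Ad).
have d0 : 0 < d by case/andP: Ad => /bireg_allowed_gt0.
have d30 : 0 < 3 * d by rewrite muln_gt0.
rewrite tri_d => /dvdnP[q ->].
by rewrite (mulnK _ d30) mulnA (mulnK _ d0) -mulnSr dvdn_mull.
Qed.

End Tripling.

Lemma bireg_allowed2E s l2 d : 0 < d ->
  bireg_allowed (2 ^ s) l2 d = (logn 2 d < s) && ~~ (l2 %| d).
Proof. by move=> d0; rewrite /bireg_allowed pfactor_dvdn // -ltnNge. Qed.

Lemma logn2_double d : 0 < d -> logn 2 (2 * d) = (logn 2 d).+1.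
Proof. by move=> d0; rewrite lognM // logn_prime. Qed.

Definition dbl (d : nat) : nat := if odd (logn 2 d) then d %/ 2 else 2 * d.

Section Doubling.

Variables (s l2 n : nat).
Hypotheses (s_even : ~~ odd s) (l2_odd : odd l2).
Hypotheses (n_gt0 : 0 < n) (dvd_n : 2 ^ s %| n).

Let A d := bireg_allowed (2 ^ s) l2 d && (d %| n).

Lemma dbl_involutive d : A d -> [/\ A (dbl d), dbl (dbl d) = d & dbl d != d].
Proof.
case/andP=> ad dn; have d0 := bireg_allowed_gt0 ad.
move: (ad); rewrite bireg_allowed2E // => /andP[ds l2d].
rewrite /dbl; case: ifPn => odd_d.
  have d2 : 2 %| d by rewrite -(expn1 2) pfactor_dvdn //; case: logn odd_d.
  have dK : 2 * (d %/ 2) = d by rewrite mulnC divnK.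
  have even_d2 : ~~ odd (logn 2 (d %/ 2)).
    by move: odd_d; rewrite -{1}dK logn2_double // divn_gt0 // dvdn_leq.
  rewrite (negbTE even_d2) dK neq_ltn ltn_Pdiv //; split => //.
  by rewrite /A (bireg_allowed_dvd (dvdn_div d2) ad) (dvdn_trans (dvdn_div d2) dn).
have lt_s : (logn 2 d).+1 < s.
  by rewrite ltn_neqAle ds andbT; apply: contraNneq s_even => <- /=.
have le_n : s <= logn 2 n by rewrite -pfactor_dvdn.
have q2 : 2 %| n %/ d.
  rewrite -(expn1 2) pfactor_dvdn ?divn_gt0 ?(dvdn_leq n_gt0) // logn_div //.
  by rewrite subn_gt0 (leq_trans (ltnW lt_s) le_n).
have d2n : 2 * d %| n by rewrite -(divnK dn) dvdn_mul.
rewrite logn2_double //= odd_d mulKn //; split=> //; last by rewrite neq_ltn ltn_Pmull ?orbT.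
rewrite /A d2n andbT bireg_allowed2E ?muln_gt0 // logn2_double // lt_s /=.
by rewrite Gauss_dvdr // coprimen2.
Qed.

Lemma npart1_even_dbl N : n <= N -> 2 %| npart1 (2 ^ s) l2 N n.
Proof. by move=> nN; apply: npart1_even; [rewrite n_gt0 | apply: dbl_involutive]. Qed.

End Doubling.

Lemma npart1_even_nonsquare l1 l2 N n : 0 < n <= N -> bireg_allowed l1 l2 n ->
  (forall d, d * d != n) -> 2 %| npart1 l1 l2 N n.
Proof.
move=> nN an nsq; have n0 : 0 < n by case/andP: nN.
apply: (npart1_even (s := fun d => n %/ d)) => // d /andP[ad dn].
have d0 := bireg_allowed_gt0 ad; have nd := dvdn_div dn.
rewrite (bireg_allowed_dvd nd an) nd divnA // mulKn //; split => //.
by apply: contra (nsq d) => /eqP nd_d; rewrite -{1}nd_d divnK.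
Qed.

Lemma npart1_even_mod3 s l2 N n : ~~ odd s -> odd l2 -> 3 %| l2 ->
  0 < n <= N -> n %% 3 = 2 -> 2 %| npart1 (2 ^ s) l2 N n.
Proof.
move=> s_even l2_odd l2_3 /andP[n0 nN] n_mod3.
have [dvd_n | ndvd_n] := boolP (2 ^ s %| n); first exact: npart1_even_dbl.
have ndvd3_n : ~~ (3 %| n) by rewrite /dvdn n_mod3.
apply: npart1_even_nonsquare; rewrite ?n0 //.
  by rewrite /bireg_allowed ndvd_n; apply: contra ndvd3_n; apply: dvdn_trans.
move=> d; apply/eqP => dd; move: n_mod3; rewrite -dd -modnMml -modnMmr.
by have := ltn_pmod d (isT : 0 < 3); case: (d %% 3) => [|[|[|]]].
Qed.

Lemma npart1_mul_even s l2 N x : ~~ odd s -> odd l2 -> 9 %| l2 ->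
  3 %| N -> ~~ (9 %| N) -> 0 < x < N ->
  2 %| npart1 (2 ^ s) l2 N x * npart1 (2 ^ s) l2 N (N - x).
Proof.
move=> s_even l2_odd l2_9 N3 N9 /andP[x0 xN].
have l2_3 : 3 %| l2 := dvdn_trans (isT : 3 %| 9) l2_9.
have cop : coprime (2 ^ s) 3 by rewrite coprimeXl.
have xy : x + (N - x) = N by rewrite subnKC // ltnW.
have xN' : 0 < x <= N by rewrite x0 ltnW.
have yN : 0 < N - x <= N by rewrite subn_gt0 xN leq_subr.
have [x3|x3] := boolP (3 %| x).
  have y3 : 3 %| N - x by rewrite -(dvdn_addr _ x3) xy.
  have [x9|x9] := boolP (9 %| x); last by rewrite dvdn_mulr // npart1_even_tri.
  have y9 : ~~ (9 %| N - x) by apply: contra N9 => y9; rewrite -xy dvdn_add.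
  by rewrite dvdn_mull // npart1_even_tri.
have : x %% 3 = 2 \/ (N - x) %% 3 = 2.
  move: x3 N3 xy; rewrite /dvdn; clear; lia.
by case=> h; [rewrite dvdn_mulr | rewrite dvdn_mull] => //; apply: npart1_even_mod3.
Qed.

Lemma dvd4_sum_npart1_conv s l2 N : ~~ odd s -> odd l2 -> 9 %| l2 ->
  3 %| N -> ~~ (9 %| N) ->
  4 %| \sum_(x < N.+1) npart1 (2 ^ s) l2 N x * npart1 (2 ^ s) l2 N (N - x).
Proof.
move=> s_even l2_odd l2_9 N3 N9.
have cop : coprime (2 ^ s) 3 by rewrite coprimeXl.
rewrite (eq_bigl (fun x : 'I_N.+1 => x <= N)) => [|x]; last by rewrite -ltnS ltn_ord.
set f := fun x => npart1 (2 ^ s) l2 N x * npart1 (2 ^ s) l2 N (N - x).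
apply: (@dvdn_sum_involution N 4 (fun x => x <= N) (fun x => N - x) f) => x xN.
- by [].
- by rewrite leq_subr subKn.
- move=> Nx; have N2 : N = x * 2 by lia.
  have x3 : 3 %| x by move: N3; rewrite N2 Gauss_dvdl.
  have x9 : ~~ (9 %| x) by apply: contra N9; rewrite N2 => /dvdn_mulr ->.
  have x0 : 0 < x by move: N9; rewrite N2 lt0n; apply: contra => /eqP ->.
  by rewrite /f Nx (_ : 4 = 2 * 2) // dvdn_mul // npart1_even_tri // x0.
move=> lt; rewrite /f subKn // [X in _ + X]mulnC addnn -mul2n (_ : 4 = 2 * 2) //.
have [->|x0] := posnP x; first by rewrite npart1_0 mul0n.
by rewrite dvdn_pmul2l // npart1_mul_even // x0 (leq_trans lt (leq_subr _ _)).
Qed.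

Definition nrep (l1 l2 N a b : nat) : nat :=
  \sum_(x < N.+1) (allowed_div l1 l2 a x && allowed_div l1 l2 b (N - x)).

Lemma nrepC l1 l2 N a b : nrep l1 l2 N a b = nrep l1 l2 N b a.
Proof.
rewrite /nrep (reindex_inj rev_ord_inj) /=; apply: eq_bigr => x _.
by rewrite subSS subKn 1?andbC // -ltnS.
Qed.

Lemma sum_nrep l1 l2 N :
  \sum_(a < N.+1) \sum_(b < N.+1) nrep l1 l2 N a b =
  \sum_(x < N.+1) npart1 l1 l2 N x * npart1 l1 l2 N (N - x).
Proof.
under eq_bigr => a _ do rewrite /nrep exchange_big.
rewrite exchange_big; apply: eq_bigr => x _.
rewrite /npart1 big_distrl; apply: eq_bigr => a _.
by rewrite big_distrr; apply: eq_bigr => b _; rewrite /= mulnb.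
Qed.

Lemma npart2_nrep l1 l2 N : npart2 l1 l2 N N =
  \sum_(a < N.+1) \sum_(b < N.+1) (b < a) * nrep l1 l2 N a b.
Proof.
apply: eq_bigr => a _; case: ifPn => [al_a|nal_a]; last first.
  rewrite big1 // => b _; rewrite /nrep big1 ?muln0 // => x _.
  by rewrite /allowed_div (negbTE nal_a).
have a0 := bireg_allowed_gt0 al_a.
have widen y : npart1 l1 l2 a.-1 y = \sum_(b < N.+1) (b < a) * allowed_div l1 l2 b y.
  rewrite /npart1 prednK // (big_ord_widen N.+1 (fun b => allowed_div l1 l2 b y : nat)) 1?ltnW //.
  by rewrite big_mkcond; apply: eq_bigr => b _; case: (b < a); rewrite ?mul1n.
under eq_bigr => m _ do rewrite widen.
rewrite exchange_big; apply: eq_bigr => b _; rewrite -big_distrr /=; congr (_ * _).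
rewrite (@sum_multiples a N (fun x => allowed_div l1 l2 b (N - x) : nat)) //.
by apply: eq_bigr => x _; rewrite mulnb /allowed_div al_a.
Qed.

Lemma sum_sym_split K (g : 'I_K -> 'I_K -> nat) : (forall a b, g a b = g b a) ->
  \sum_(a < K) \sum_(b < K) g a b =
  2 * \sum_(a < K) \sum_(b < K) (b < a) * g a b + \sum_(a < K) g a a.
Proof.
move=> gC.
have split_row a : \sum_(b < K) g a b =
    \sum_(b < K) (b < a) * g a b + \sum_(b < K) (a < b) * g a b + g a a.
  rewrite -big_split (bigD1 a) //= [in RHS](bigD1 a) //= ltnn add0n addnC.
  congr (_ + _); apply: eq_bigr => b ba.
  have : (b : nat) != a by [].
  by case: ltngtP; rewrite ?mul1n ?mul0n ?add0n ?addn0.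
under eq_bigr => a _ do rewrite split_row.
rewrite !big_split /= mul2n -addnn; congr (_ + _ + _).
by rewrite exchange_big; apply: eq_bigr => a _; apply: eq_bigr => b _; rewrite gC.
Qed.

Lemma nrep_diag l1 l2 N a : 0 < N ->
  allowed_div l1 l2 a N + nrep l1 l2 N a a =
  (bireg_allowed l1 l2 a && (a %| N)) * (N %/ a).
Proof.
move=> N0; rewrite /nrep /allowed_div N0 andbT.
case al_a: (bireg_allowed l1 l2 a) => /=; last by rewrite big1.
have a0 := bireg_allowed_gt0 al_a.
have [aN|naN] /= := boolP (a %| N); last first.
  rewrite big1 // => x _; apply/eqP; rewrite eqn0Ngt lt0b.
  apply: contra naN => /and3P[/andP[ax _] aNx _].
  by rewrite -(subnKC (ltnSE (ltn_ord x))) dvdn_add.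
rewrite mul1n; under eq_bigr => x _ do rewrite -mulnb.
rewrite -(@sum_multiples a N (fun x => (a %| N - x) && (0 < N - x) : nat)) //.
have q0 : 0 < N %/ a by rewrite divn_gt0 // dvdn_leq.
rewrite big_nat_recr //= divnK // subnn andbF addn0.
rewrite (eq_big_nat _ _ (F2 := fun=> 1)) => [|m /andP[_ m_lt]].
  by rewrite sum_nat_const_nat muln1 add1n subn1 prednK.
have lt : m * a < N by rewrite -[X in _ < X](divnK aN) ltn_mul2r a0.
by rewrite dvdn_sub ?dvdn_mull // subn_gt0 lt.
Qed.

Lemma dvd4_npart1_npart2 s l2 N : ~~ odd s -> odd l2 -> 9 %| l2 ->
  0 < N -> 3 %| N -> ~~ (9 %| N) ->
  4 %| npart1 (2 ^ s) l2 N N + 2 * npart2 (2 ^ s) l2 N N.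
Proof.
move=> s_even l2_odd l2_9 N0 N3 N9.
have cop : coprime (2 ^ s) 3 by rewrite coprimeXl.
set c := npart1 _ _ N N; set P := npart2 _ _ N N.
set D := \sum_(a < N.+1) nrep (2 ^ s) l2 N a a.
have c_even : 2 %| c by apply: (npart1_even_tri cop l2_9 N3 N9); rewrite N0 /=.
have diag : c + D = \sum_(a < N.+1 | bireg_allowed (2 ^ s) l2 a && (a %| N)) N %/ a.
  rewrite big_mkcond /c /npart1 /D -big_split; apply: eq_bigr => a _.
  by rewrite /= nrep_diag //; case: (_ && _); rewrite ?mul1n ?mul0n.
have conv : \sum_(x < N.+1) npart1 (2 ^ s) l2 N x * npart1 (2 ^ s) l2 N (N - x) = 2 * P + D.
  by rewrite -sum_nrep (sum_sym_split (@nrepC _ _ _)) -npart2_nrep.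
have : 4 %| (c + 2 * P) + (c + D).
  rewrite addnACA addnn -mul2n; apply: dvdn_add; last by rewrite -conv dvd4_sum_npart1_conv.
  by rewrite (_ : 4 = 2 * 2) // dvdn_pmul2l.
by rewrite diag dvdn_addl // dvd4_sum_quotient_tri.
Qed.

Theorem theorem3 (n beta i : nat) :
  2 <= beta -> (i = 1 \/ i = 2) ->
  (forall alpha : nat,
      Bbar (2 ^ (2 * alpha + 1)) (3 ^ beta) (9 * n + 3 * i) = 0 %[mod 4]) /\
  (forall alpha : nat, 1 <= alpha ->
      Bbar (2 ^ (2 * alpha)) (3 ^ beta) (9 * n + 3 * i) = 0 %[mod 8]).
Proof.
move=> beta2 hi; set N := 9 * n + 3 * i.
have l2_odd : odd (3 ^ beta) by rewrite oddX orbT.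
have l2_9 : 9 %| 3 ^ beta := dvdn_exp2l 3 beta2.
have N0 : 0 < N by rewrite /N; case: hi => ->; rewrite addn_gt0 orbT.
have N3 : 3 %| N by rewrite dvdn_add // dvdn_mulr.
have N9 : ~~ (9 %| N) by rewrite dvdn_addr; [case: hi => -> | exact: dvdn_mulr].
have Bbar_mod8 s : Bbar (2 ^ s) (3 ^ beta) N =
    2 * (npart1 (2 ^ s) (3 ^ beta) N N + 2 * npart2 (2 ^ s) (3 ^ beta) N N) %[mod 8].
  by rewrite /Bbar ovcount_mod8 eqn0Ngt N0 mulnDr mulnA.
split=> [alpha | alpha _].
  rewrite -(modn_dvdm _ (isT : 4 %| 8)) Bbar_mod8 modn_dvdm // mod0n; apply/eqP.
  rewrite mulnDr mulnA; apply: dvdn_add; last exact: dvdn_mulr.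
  rewrite (_ : 4 = 2 * 2) // dvdn_pmul2l //.
  by apply: npart1_even_tri; rewrite ?N0 ?leqnn // coprimeXl.
rewrite Bbar_mod8 mod0n; apply/eqP; rewrite -/(dvdn 8 _).
rewrite (_ : 8 = 2 * 4) // dvdn_pmul2l // dvd4_npart1_npart2 //.
by rewrite oddM.
Qed.
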